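(* Let $a>1$ and $C_j(n,a)=\binom{n}{j}\left(\frac{1+a}{2}\right)^{n-j}\left(\frac{1-a}{2}\right)^j$. Then for every $\lambda\in\mathbb{R}$, $$\lim_{n\to\infty}\sum_{j=0}^nC_j(n,a)e^{\lambda(1-2j/n)-\frac{(1-2j/n)^2}{2}}=e^{-\frac{a^2}{2}+a\lambda}.$$ In particular $\lim_{n\to\infty}\sum_{j=0}^nC_j(n,a)e^{-\frac{(1-2j/n)^2}{2}}=e^{-a^2/2}$ and $\lim_{n\to\infty}\sum_{j=0}^nC_j(n,a)e^{\frac a2(1-2j/n)-\frac{(1-2j/n)^2}{2}}=1$. *)

From Stdlib Require Import Reals.
From Coquelicot Require Import Coquelicot.
Open Scope R_scope.

Definition Cj (n j : nat) (a : R) : R :=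
  Binomial.C n j * ((1 + a) / 2) ^ (n - j) * ((1 - a) / 2) ^ j.

Definition Ssum (a lam : R) (n : nat) : R :=
  sum_f_R0 (fun j => Cj n j a *
     exp (lam * (1 - 2 * INR j / INR n) - (1 - 2 * INR j / INR n) ^ 2 / 2)) n.

(* Write [F y = exp (lam * y - y ^ 2 / 2) = sum_k c_k y ^ k], an entire power series, and
   [x_j = 1 - 2 j / n].  The weights [C_j(n, a)] are those of a "signed binomial walk" with
   steps [+1/n], [-1/n] of masses [p = (1 + a) / 2], [q = (1 - a) / 2], so the sum equals
   [sum_k c_k M_n(k)] with [M_n(k) = sum_j C_j(n, a) x_j ^ k].  One more step of the walk
   convolves the moments with the step moments [p h ^ r + q (- h) ^ r], which are [h ^ r]
   or [a h ^ r]; hence [0 <= M_n(k) <= a ^ k], and keeping only two terms of the convolution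
   gives [M_n(k) >= a ^ k (1 - 1/n) ... (1 - (k-1)/n)], so [M_n(k) -> a ^ k].  Tannery's
   theorem, with the summable majorant [|c_k| a ^ k], yields the limit [sum_k c_k a ^ k = F a]. *)

From Stdlib Require Import Reals Lra Lia.
From Coquelicot Require Import Coquelicot.
Open Scope R_scope.

Lemma sum_f_R0_swap (u : nat -> nat -> R) m n :
  sum_f_R0 (fun i => sum_f_R0 (u i) n) m = sum_f_R0 (fun j => sum_f_R0 (fun i => u i j) m) n.
Proof.
  transitivity (sum_n (fun i => sum_n (u i) n) m).
  { rewrite sum_n_Reals; apply sum_eq; intros; now rewrite sum_n_Reals. }
  rewrite sum_n_switch, sum_n_Reals; apply sum_eq; intros; now rewrite sum_n_Reals.
Qed.

Lemma C_ge0 n k : 0 <= Binomial.C n k.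
Proof.
  unfold Binomial.C; apply Rmult_le_pos; [apply pos_INR|].
  left; apply Rinv_0_lt_compat, Rmult_lt_0_compat; apply INR_fact_lt_0.
Qed.

Lemma C_S_n k : Binomial.C (S k) k = INR (S k).
Proof.
  unfold Binomial.C; rewrite Nat.sub_succ_l, Nat.sub_diag by lia.
  change (Factorial.fact (S k)) with (S k * Factorial.fact k)%nat.
  rewrite mult_INR; simpl; field; apply INR_fact_neq_0.
Qed.

Lemma sum_f_R0_ge_term (f : nat -> R) i n :
  (forall k, 0 <= f k) -> (i <= n)%nat -> f i <= sum_f_R0 f n.
Proof.
  intros Hf Hin; induction n as [|n IH].
  - replace i with O by lia; simpl; lra.
  - simpl; destruct (Nat.eq_dec i (S n)) as [-> | Hi].
    + pose proof (cond_pos_sum f n Hf); lra.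
    + pose proof (Hf (S n)); assert (f i <= sum_f_R0 f n) by (apply IH; lia); lra.
Qed.

Section BinomialWeights.

Variables p q : R.

Definition binom_weight (m j : nat) : R :=
  if (j <=? m)%nat then Binomial.C m j * p ^ (m - j) * q ^ j else 0.

Lemma binom_weight_0_0 : binom_weight 0 0 = 1.
Proof. unfold binom_weight; simpl; rewrite C_n_0; ring. Qed.

Lemma binom_weight_S_0 m : binom_weight (S m) 0 = p * binom_weight m 0.
Proof. unfold binom_weight; simpl; rewrite !C_n_0, Nat.sub_0_r; ring. Qed.

Lemma binom_weight_S_S m j :
  binom_weight (S m) (S j) = p * binom_weight m (S j) + q * binom_weight m j.
Proof.
  unfold binom_weight.
  destruct (Nat.lt_trichotomy j m) as [Hjm | [-> | Hmj]].
  - rewrite (proj2 (Nat.leb_le (S j) (S m))), (proj2 (Nat.leb_le (S j) m)),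
      (proj2 (Nat.leb_le j m)) by lia.
    rewrite <- (pascal m j Hjm).
    replace (S m - S j)%nat with (S (m - S j)) by lia.
    replace (m - j)%nat with (S (m - S j)) by lia.
    simpl; ring.
  - rewrite (proj2 (Nat.leb_le (S m) (S m))), (proj2 (Nat.leb_gt (S m) m)),
      (proj2 (Nat.leb_le m m)), !C_n_n, !Nat.sub_diag by lia.
    simpl; ring.
  - rewrite (proj2 (Nat.leb_gt (S j) (S m))), (proj2 (Nat.leb_gt (S j) m)),
      (proj2 (Nat.leb_gt j m)) by lia.
    ring.
Qed.

Lemma binom_weight_out m : binom_weight m (S m) = 0.
Proof. unfold binom_weight; now rewrite (proj2 (Nat.leb_gt (S m) m)) by lia. Qed.

Lemma sum_binom_weight_S m (phi : nat -> R) :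
  sum_f_R0 (fun j => binom_weight (S m) j * phi j) (S m) =
  sum_f_R0 (fun j => binom_weight m j * (p * phi j + q * phi (S j))) m.
Proof.
  enough (H : forall N, sum_f_R0 (fun j => binom_weight (S m) j * phi j) (S N) =
    sum_f_R0 (fun j => binom_weight m j * (p * phi j + q * phi (S j))) N
    + p * binom_weight m (S N) * phi (S N)).
  { rewrite H, binom_weight_out; ring. }
  induction N as [|N IH].
  - simpl; rewrite binom_weight_S_0, binom_weight_S_S; ring.
  - rewrite tech5, IH, binom_weight_S_S; simpl; ring.
Qed.

Variable h : R.

Definition moment (m k : nat) : R :=
  sum_f_R0 (fun j => binom_weight m j * (h * (INR m - 2 * INR j)) ^ k) m.

Definition moment_step (r : nat) : R := p * h ^ r + q * (- h) ^ r.

Lemma moment_0 k : moment 0 k = 0 ^ k.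
Proof.
  unfold moment; simpl; rewrite binom_weight_0_0.
  replace (h * (0 - 2 * 0)) with 0 by ring; ring.
Qed.

Lemma moment_S m k :
  moment (S m) k = sum_f_R0 (fun i => Binomial.C k i * moment_step (k - i) * moment m i) k.
Proof.
  unfold moment; rewrite sum_binom_weight_S.
  transitivity (sum_f_R0 (fun j => sum_f_R0 (fun i =>
    binom_weight m j * (Binomial.C k i * moment_step (k - i) * (h * (INR m - 2 * INR j)) ^ i)) k) m).
  - apply sum_eq; intros j _.
    set (y := h * (INR m - 2 * INR j)).
    replace (h * (INR (S m) - 2 * INR j)) with (y + h) by (rewrite S_INR; unfold y; ring).
    replace (h * (INR (S m) - 2 * INR (S j))) with (y + - h) by (rewrite !S_INR; unfold y; ring).
    rewrite !binomial, !scal_sum, <- sum_plus, scal_sum.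
    apply sum_eq; intros i _; unfold moment_step; ring.
  - rewrite sum_f_R0_swap; apply sum_eq; intros i _.
    rewrite scal_sum; apply sum_eq; intros j _; ring.
Qed.

End BinomialWeights.

Fixpoint falling (x : R) (k : nat) : R :=
  match k with O => 1 | S k' => falling x k' * (x - INR k') end.

Lemma falling_S_succ x k : falling (x + 1) (S k) = (x + 1) * falling x k.
Proof.
  induction k as [|k IH]; [simpl; ring|].
  change (falling (x + 1) (S k) * (x + 1 - INR (S k)) = (x + 1) * (falling x k * (x - INR k))).
  rewrite IH, S_INR; ring.
Qed.

Lemma falling_0_S k : falling 0 (S k) = 0.
Proof. induction k as [|k IH]; simpl in *; [|rewrite IH]; ring. Qed.

Section SignedBinomial.

Variable a : R.
Hypothesis a_ge1 : 1 <= a.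
Local Notation p := ((1 + a) / 2).
Local Notation q := ((1 - a) / 2).
Variable h : R.
Hypothesis h_ge0 : 0 <= h.

Lemma moment_step_0 : moment_step p q h 0 = 1.
Proof. unfold moment_step; simpl; field. Qed.

Lemma moment_step_1 : moment_step p q h 1 = a * h.
Proof. unfold moment_step; simpl; field. Qed.

(* The step moment is [h ^ r] for even [r] and [a * h ^ r] for odd [r]. *)
Lemma moment_step_bounds r : 0 <= moment_step p q h r <= (a * h) ^ r.
Proof.
  unfold moment_step.
  replace (- h) with (-1 * h) by ring; rewrite !Rpow_mult_distr.
  assert (0 <= h ^ r) by now apply pow_le.
  destruct (Nat.Even_or_Odd r) as [[n ->] | [n ->]].
  - rewrite pow_1_even.
    assert (1 <= a ^ (2 * n)) by now apply pow_R1_Rle.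
    replace (p * h ^ (2 * n) + q * (1 * h ^ (2 * n))) with (h ^ (2 * n)) by field.
    split; nra.
  - rewrite Nat.add_1_r in *; rewrite pow_1_odd.
    assert (a <= a ^ S (2 * n)) by (rewrite <- (pow_1 a) at 1; apply Rle_pow; [lra | lia]).
    replace (p * h ^ S (2 * n) + q * (-1 * h ^ S (2 * n))) with (a * h ^ S (2 * n)) by field.
    split; nra.
Qed.

Lemma moment_ge0 m k : 0 <= moment p q h m k.
Proof.
  revert k; induction m as [|m IH]; intros k.
  - rewrite moment_0; apply pow_le; lra.
  - rewrite moment_S; apply cond_pos_sum; intros i.
    pose proof (C_ge0 k i); pose proof (moment_step_bounds (k - i)); pose proof (IH i).
    apply Rmult_le_pos; [apply Rmult_le_pos|]; tauto.
Qed.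

Lemma moment_le m k : moment p q h m k <= (a * h * INR m) ^ k.
Proof.
  revert k; induction m as [|m IH]; intros k.
  - rewrite moment_0; simpl; right; f_equal; ring.
  - rewrite moment_S, S_INR.
    replace (a * h * (INR m + 1)) with (a * h * INR m + a * h) by ring.
    rewrite binomial; apply sum_Rle; intros i _.
    pose proof (C_ge0 k i); pose proof (moment_step_bounds (k - i)).
    pose proof (IH i); pose proof (moment_ge0 m i).
    rewrite Rmult_assoc, (Rmult_assoc (Binomial.C k i)).
    apply Rmult_le_compat_l; [assumption|].
    rewrite Rmult_comm; apply Rmult_le_compat; tauto.
Qed.

(* Only the two top terms [i = k + 1] and [i = k] of [moment_S] are kept. *)
Lemma falling_le_moment m k : (a * h) ^ k * falling (INR m) k <= moment p q h m k.
Proof.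
  revert k; induction m as [|m IH]; intros k.
  - rewrite moment_0; destruct k as [|k].
    + simpl; lra.
    + rewrite falling_0_S, pow_i by lia; lra.
  - rewrite moment_S; destruct k as [|k].
    + simpl; rewrite moment_step_0; specialize (IH 0%nat); simpl in IH.
      unfold Binomial.C; simpl; lra.
    + set (t i := Binomial.C (S k) i * moment_step p q h (S k - i) * moment p q h m i).
      assert (t_ge0 : forall i, 0 <= t i).
      { intros i; pose proof (C_ge0 (S k) i); pose proof (moment_step_bounds (S k - i)).
        pose proof (moment_ge0 m i); unfold t; apply Rmult_le_pos; [apply Rmult_le_pos|]; tauto. }
      assert (top : t k + t (S k) <= sum_f_R0 t (S k)).
      { simpl; pose proof (sum_f_R0_ge_term t k k t_ge0 (le_n k)); lra. }
      assert (Etop : t k + t (S k) = INR (S k) * (a * h) * moment p q h m k + moment p q h m (S k)).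
      { unfold t; rewrite C_S_n, C_n_n, Nat.sub_diag, moment_step_0.
        replace (S k - k)%nat with 1%nat by lia; rewrite moment_step_1; ring. }
      pose proof (IH k) as IHk; pose proof (IH (S k)) as IHSk; simpl falling in IHSk.
      assert (kah_ge0 : 0 <= INR (S k) * (a * h)) by (apply Rmult_le_pos; [apply pos_INR | nra]).
      pose proof (Rmult_le_compat_l _ _ _ kah_ge0 IHk).
      rewrite S_INR, falling_S_succ; rewrite S_INR in *.
      change ((a * h) ^ S k) with (a * h * (a * h) ^ k) in *.
      replace (a * h * (a * h) ^ k * ((INR m + 1) * falling (INR m) k)) with
        ((INR k + 1) * (a * h) * ((a * h) ^ k * falling (INR m) k)
         + a * h * (a * h) ^ k * (falling (INR m) k * (INR m - INR k))) by ring.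
      lra.
Qed.

End SignedBinomial.

Lemma inv_INR_ge0 n : 0 <= / INR n.
Proof.
  destruct n as [|n]; [simpl; rewrite Rinv_0; lra|].
  left; apply Rinv_0_lt_compat, lt_0_INR; lia.
Qed.

Lemma is_lim_seq_inv_INR : is_lim_seq (fun n => / INR n) 0.
Proof.
  replace (Finite 0) with (Rbar_inv p_infty) by reflexivity.
  apply is_lim_seq_inv; [apply is_lim_seq_INR | discriminate].
Qed.

Lemma is_lim_seq_falling_scaled k : is_lim_seq (fun n => (/ INR n) ^ k * falling (INR n) k) 1.
Proof.
  induction k as [|k IH].
  - apply is_lim_seq_ext with (fun _ => 1); [intros; simpl; ring | apply is_lim_seq_const].
  - apply is_lim_seq_ext_loc with (fun n => (/ INR n) ^ k * falling (INR n) k * (1 - INR k * / INR n)).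
    { exists 1%nat; intros n Hn; simpl; field; apply not_0_INR; lia. }
    replace (Finite 1) with (Finite (1 * (1 - INR k * 0))) by (f_equal; ring).
    apply is_lim_seq_mult'; [exact IH|].
    apply is_lim_seq_minus'; [apply is_lim_seq_const|].
    apply (is_lim_seq_scal_l _ _ (Finite 0)), is_lim_seq_inv_INR.
Qed.

Section ScaledMoments.

Variable a : R.
Hypothesis a_ge1 : 1 <= a.
Local Notation p := ((1 + a) / 2).
Local Notation q := ((1 - a) / 2).

Lemma scaled_moment_bounds n k : 0 <= moment p q (/ INR n) n k <= a ^ k.
Proof.
  split; [now apply moment_ge0, inv_INR_ge0|].
  eapply Rle_trans; [apply moment_le; [assumption | apply inv_INR_ge0]|].
  apply pow_incr; destruct n as [|n].
  - simpl; rewrite Rinv_0; lra.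
  - rewrite Rmult_assoc, Rinv_l by (apply not_0_INR; lia); lra.
Qed.

Lemma is_lim_seq_scaled_moment k : is_lim_seq (fun n => moment p q (/ INR n) n k) (a ^ k).
Proof.
  apply is_lim_seq_le_le with (u := fun n => a ^ k * ((/ INR n) ^ k * falling (INR n) k))
                              (w := fun _ => a ^ k).
  - intros n; split; [|apply scaled_moment_bounds].
    eapply Rle_trans; [|apply falling_le_moment; [assumption | apply inv_INR_ge0]].
    rewrite Rpow_mult_distr; right; ring.
  - replace (Finite (a ^ k)) with (Finite (a ^ k * 1)) by (f_equal; ring).
    apply (is_lim_seq_scal_l _ _ (Finite 1)), is_lim_seq_falling_scaled.
  - apply is_lim_seq_const.
Qed.

End ScaledMoments.

(* [R]-valued instances of Coquelicot lemmas stated over normed modules: with them the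
   generated goals live in [R], where [ring] and [Rabs] apply. *)
Lemma is_series_ext_R (u v : nat -> R) l :
  (forall k, u k = v k) -> is_series u l -> is_series v l.
Proof. apply is_series_ext. Qed.

Lemma ex_series_dominated (d B : nat -> R) :
  (forall k, Rabs (d k) <= B k) -> ex_series B -> ex_series d.
Proof. intros HdB HB; exact (ex_series_le d B HdB HB). Qed.

Definition is_entire_pseries (c : nat -> R) (F : R -> R) : Prop :=
  forall y, is_series (fun k => c k * y ^ k) (F y) /\ ex_series (fun k => Rabs (c k * y ^ k)).

Lemma is_series_exp t : is_series (fun k => t ^ k / INR (Factorial.fact k)) (exp t).
Proof.
  eapply is_series_ext_R; [|apply (is_exp_Reals t)].
  intros k; simpl; rewrite pow_n_pow; reflexivity.
Qed.

Lemma is_entire_pseries_exp lam :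
  is_entire_pseries (fun k => lam ^ k / INR (Factorial.fact k)) (fun y => exp (lam * y)).
Proof.
  intros y; split.
  - eapply is_series_ext_R; [|apply is_series_exp].
    intros k; cbv beta; rewrite Rpow_mult_distr; unfold Rdiv; ring.
  - exists (exp (Rabs (lam * y))); eapply is_series_ext_R; [|apply is_series_exp].
    intros k; cbv beta; unfold Rdiv.
    rewrite !Rabs_mult, Rabs_inv, (Rabs_pos_eq (INR _)) by apply pos_INR.
    rewrite <- !RPow_abs, Rpow_mult_distr; ring.
Qed.

Lemma is_series_0 : is_series (fun _ : nat => 0) 0.
Proof.
  apply is_series_Reals; intros eps Heps; exists O; intros n _.
  rewrite sum_cte; unfold R_dist; rewrite Rmult_0_l, Rminus_0_r, Rabs_R0; exact Heps.
Qed.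

Lemma scal_pow_n (y c : R) n : scal (pow_n y n) c = y ^ n * c.
Proof. rewrite pow_n_pow; reflexivity. Qed.

Definition even_coef (c : nat -> R) (k : nat) : R :=
  if Nat.even k then c (Nat.div2 k) else 0.

Lemma is_series_even_coef (c : nat -> R) x l :
  is_series (fun n => c n * (x ^ 2) ^ n) l -> is_series (fun k => even_coef c k * x ^ k) l.
Proof.
  intros Hc.
  assert (Hodd : is_series (fun n : nat => scal (pow_n (x ^ 2) n) (even_coef c (2 * n + 1))) 0).
  { eapply is_series_ext_R; [|apply is_series_0].
    intros n; cbv beta; rewrite scal_pow_n; unfold even_coef.
    rewrite Nat.add_1_r, Nat.even_succ, Nat.odd_mul; simpl; ring. }
  assert (Heven : is_series (fun n : nat => scal (pow_n (x ^ 2) n) (even_coef c (2 * n))) l).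
  { eapply is_series_ext_R; [|exact Hc].
    intros n; cbv beta; rewrite scal_pow_n; unfold even_coef.
    rewrite Nat.even_mul, Nat.div2_double; simpl; ring. }
  pose proof (is_pseries_odd_even (even_coef c) x l 0 Heven Hodd) as H.
  rewrite Rmult_0_r, Rplus_0_r in H.
  eapply is_series_ext_R; [|exact H].
  intros k; cbv beta; rewrite scal_pow_n; ring.
Qed.

Lemma is_entire_pseries_even c F :
  is_entire_pseries c F -> is_entire_pseries (even_coef c) (fun y => F (y ^ 2)).
Proof.
  intros HF y; split; [apply is_series_even_coef, HF|].
  destruct (proj2 (HF (y ^ 2))) as [L HL]; exists L.
  eapply is_series_ext_R with (fun k => even_coef (fun n => Rabs (c n)) k * Rabs y ^ k).
  - intros k; unfold even_coef; destruct (Nat.even k).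
    + rewrite Rabs_mult, RPow_abs; reflexivity.
    + rewrite !Rmult_0_l, Rabs_R0; reflexivity.
  - apply is_series_even_coef; eapply is_series_ext_R; [|exact HL].
    intros n; cbv beta; rewrite Rabs_mult, !RPow_abs; reflexivity.
Qed.

Lemma is_series_PS_mult (u v : nat -> R) x lu lv :
  is_series (fun k => u k * x ^ k) lu -> is_series (fun k => v k * x ^ k) lv ->
  ex_series (fun k => Rabs (u k * x ^ k)) -> ex_series (fun k => Rabs (v k * x ^ k)) ->
  is_series (fun n => PS_mult u v n * x ^ n) (lu * lv).
Proof.
  intros Hu Hv Hu' Hv'.
  eapply is_series_ext_R; [|exact (is_series_mult _ _ _ _ Hu Hv Hu' Hv')].
  intros n; unfold PS_mult; rewrite Rmult_comm, scal_sum; apply sum_eq; intros i Hi.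
  replace (x ^ n) with (x ^ i * x ^ (n - i)) by (rewrite <- pow_add; f_equal; lia); ring.
Qed.

Lemma is_entire_pseries_mult u v F G :
  is_entire_pseries u F -> is_entire_pseries v G ->
  is_entire_pseries (PS_mult u v) (fun y => F y * G y).
Proof.
  intros HF HG y; destruct (HF y) as [HFy HFy']; destruct (HG y) as [HGy HGy']; split.
  - now apply is_series_PS_mult.
  - assert (Habs : forall (w : nat -> R) k, Rabs (w k) * Rabs y ^ k = Rabs (w k * y ^ k)).
    { intros w k; rewrite Rabs_mult, RPow_abs; reflexivity. }
    destruct HFy' as [LF HLF]; destruct HGy' as [LG HLG].
    apply (ex_series_dominated _ (fun n => PS_mult (fun k => Rabs (u k)) (fun k => Rabs (v k)) n * Rabs y ^ n)).
    + intros n; rewrite Rabs_Rabsolu, Rabs_mult, RPow_abs.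
      apply Rmult_le_compat_r; [apply Rabs_pos|].
      unfold PS_mult; eapply Rle_trans; [apply sum_f_R0_triangle|].
      right; apply sum_eq; intros; apply Rabs_mult.
    + exists (LF * LG); apply is_series_PS_mult.
      * eapply is_series_ext_R; [|exact HLF]; intros; symmetry; apply Habs.
      * eapply is_series_ext_R; [|exact HLG]; intros; symmetry; apply Habs.
      * exists LF; eapply is_series_ext_R; [|exact HLF]; intros; rewrite Habs; symmetry; apply Rabs_Rabsolu.
      * exists LG; eapply is_series_ext_R; [|exact HLG]; intros; rewrite Habs; symmetry; apply Rabs_Rabsolu.
Qed.

Lemma is_entire_pseries_gaussian lam :
  is_entire_pseries
    (PS_mult (fun k => lam ^ k / INR (Factorial.fact k))
             (even_coef (fun k => (- / 2) ^ k / INR (Factorial.fact k))))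
    (fun y => exp (lam * y - y ^ 2 / 2)).
Proof.
  intros y.
  replace (exp (lam * y - y ^ 2 / 2)) with (exp (lam * y) * exp (- / 2 * y ^ 2))
    by (rewrite <- exp_plus; f_equal; field).
  exact (is_entire_pseries_mult _ _ _ _ (is_entire_pseries_exp lam)
           (is_entire_pseries_even _ _ (is_entire_pseries_exp (- / 2))) y).
Qed.

Lemma is_series_sum_f_R0 (u : nat -> nat -> R) (l : nat -> R) N :
  (forall j, is_series (u j) (l j)) ->
  is_series (fun k => sum_f_R0 (fun j => u j k) N) (sum_f_R0 l N).
Proof.
  intros Hu; induction N as [|N IH]; [apply Hu|].
  exact (is_series_plus _ _ _ _ IH (Hu (S N))).
Qed.

Lemma is_lim_seq_sum_f_R0 (u : nat -> nat -> R) (l : nat -> R) N :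
  (forall k, is_lim_seq (fun n => u n k) (l k)) ->
  is_lim_seq (fun n => sum_f_R0 (u n) N) (sum_f_R0 l N).
Proof.
  intros Hu; induction N as [|N IH]; [apply Hu|].
  simpl; apply is_lim_seq_plus'; [exact IH | apply Hu].
Qed.

Lemma Rabs_Series_le_split (d B : nat -> R) N :
  (forall k, Rabs (d k) <= B k) -> ex_series B ->
  Rabs (Series d) <= sum_f_R0 (fun k => Rabs (d k)) N + Series (fun k => B (S N + k)%nat).
Proof.
  intros HdB HB.
  assert (HBtail : ex_series (fun k => B (S N + k)%nat)) by now apply ex_series_incr_n.
  assert (Hdtail : forall k, Rabs (Rabs (d (S N + k)%nat)) <= B (S N + k)%nat).
  { intros k; rewrite Rabs_Rabsolu; apply HdB. }
  rewrite (Series_incr_n d (S N)) by (lia || now apply (ex_series_dominated d B)); simpl pred.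
  eapply Rle_trans; [apply Rabs_triang|]; apply Rplus_le_compat; [apply sum_f_R0_triangle|].
  eapply Rle_trans; [apply Series_Rabs, (ex_series_dominated _ _ Hdtail HBtail)|].
  apply Series_le; [intros k; split; [apply Rabs_pos | apply HdB] | exact HBtail].
Qed.

Lemma Series_tail_small (B : nat -> R) eps :
  ex_series B -> 0 < eps -> exists N, Series (fun k => B (S N + k)%nat) < eps.
Proof.
  intros HB Heps.
  pose proof (Series_correct _ HB) as HS; apply is_series_Reals in HS.
  destruct (HS eps Heps) as [N HN]; exists N.
  specialize (HN N (le_n N)); unfold R_dist in HN; apply Rabs_def2 in HN.
  pose proof (Series_incr_n B (S N) ltac:(lia) HB); simpl pred in *; lra.
Qed.

Lemma is_lim_seq_Series_dominated_0 (d : nat -> nat -> R) (B : nat -> R) :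
  (forall n k, Rabs (d n k) <= B k) -> ex_series B ->
  (forall k, is_lim_seq (fun n => d n k) 0) ->
  is_lim_seq (fun n => Series (d n)) 0.
Proof.
  intros HdB HB Hd; apply is_lim_seq_Reals; intros eps Heps.
  destruct (Series_tail_small B (eps / 2) HB) as [N HN]; [lra|].
  assert (Hhead : is_lim_seq (fun n => sum_f_R0 (fun k => Rabs (d n k)) N) 0).
  { replace (Finite 0) with (Finite (sum_f_R0 (fun _ => 0) N)) by (rewrite sum_cte; f_equal; ring).
    apply is_lim_seq_sum_f_R0; intros k.
    replace 0 with (Rabs 0) by apply Rabs_R0; apply (is_lim_seq_abs _ 0), Hd. }
  apply is_lim_seq_Reals in Hhead; destruct (Hhead (eps / 2)) as [N1 HN1]; [lra|].
  exists N1; intros n Hn; specialize (HN1 n Hn); unfold R_dist in *.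
  rewrite Rminus_0_r, Rabs_pos_eq in HN1 by (apply cond_pos_sum; intros; apply Rabs_pos).
  rewrite Rminus_0_r; pose proof (Rabs_Series_le_split (d n) B N (HdB n) HB); lra.
Qed.

Lemma is_lim_seq_Series_dominated (u : nat -> nat -> R) (v M : nat -> R) :
  (forall n k, Rabs (u n k) <= M k) -> ex_series M ->
  (forall k, is_lim_seq (fun n => u n k) (v k)) ->
  is_lim_seq (fun n => Series (u n)) (Series v).
Proof.
  intros HuM HM Hu.
  assert (HvM : forall k, Rabs (v k) <= M k).
  { intros k; apply (is_lim_seq_le (fun n => Rabs (u n k)) (fun _ => M k) (Rabs (v k)) (M k)).
    - intros n; apply HuM.
    - apply (is_lim_seq_abs _ (v k)), Hu.
    - apply is_lim_seq_const. }
  assert (H2M : ex_series (fun k => 2 * M k)) by exact (ex_series_scal_l 2 M HM).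
  assert (Hd : is_lim_seq (fun n => Series (fun k => u n k - v k)) 0).
  { apply (is_lim_seq_Series_dominated_0 _ (fun k => 2 * M k)); [|exact H2M|].
    - intros n k; eapply Rle_trans; [apply Rabs_triang|]; rewrite Rabs_Ropp.
      pose proof (HuM n k); pose proof (HvM k); lra.
    - intros k; replace 0 with (v k - v k) by ring.
      apply is_lim_seq_minus'; [apply Hu | apply is_lim_seq_const]. }
  apply is_lim_seq_ext with (fun n => Series (fun k => u n k - v k) + Series v).
  - intros n; rewrite Series_minus; [ring | |];
      eapply ex_series_dominated; eauto.
  - replace (Finite (Series v)) with (Finite (0 + Series v)) by (f_equal; ring).
    apply is_lim_seq_plus'; [exact Hd | apply is_lim_seq_const].
Qed.

Theorem is_lim_seq_binom_weight_sum a c F :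
  1 <= a -> is_entire_pseries c F ->
  is_lim_seq (fun n => sum_f_R0 (fun j => binom_weight ((1 + a) / 2) ((1 - a) / 2) n j
                                         * F (/ INR n * (INR n - 2 * INR j))) n) (F a).
Proof.
  intros Ha HF.
  set (w := binom_weight ((1 + a) / 2) ((1 - a) / 2)).
  set (mom n k := moment ((1 + a) / 2) ((1 - a) / 2) (/ INR n) n k).
  rewrite <- (is_series_unique _ _ (proj1 (HF a))).
  apply is_lim_seq_ext with (fun n => Series (fun k => c k * mom n k)).
  { intros n; apply is_series_unique.
    eapply is_series_ext_R;
      [|apply (is_series_sum_f_R0 (fun j k => w n j * (c k * (/ INR n * (INR n - 2 * INR j)) ^ k)))].
    - intros k; unfold mom, moment; fold w; rewrite scal_sum; apply sum_eq; intros; ring.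
    - intros j; exact (is_series_scal_l (w n j) _ _ (proj1 (HF _))). }
  apply (is_lim_seq_Series_dominated _ _ (fun k => Rabs (c k * a ^ k))).
  - intros n k; destruct (scaled_moment_bounds a Ha n k).
    rewrite !Rabs_mult, (Rabs_pos_eq (mom n k)), (Rabs_pos_eq (a ^ k)) by (auto; apply pow_le; lra).
    now apply Rmult_le_compat_l; [apply Rabs_pos|].
  - apply HF.
  - intros k; apply (is_lim_seq_scal_l _ _ (Finite (a ^ k))), is_lim_seq_scaled_moment, Ha.
Qed.

Lemma Ssum_binom_weight_sum a lam n : (1 <= n)%nat ->
  Ssum a lam n = sum_f_R0 (fun j => binom_weight ((1 + a) / 2) ((1 - a) / 2) n j
    * exp (lam * (/ INR n * (INR n - 2 * INR j)) - (/ INR n * (INR n - 2 * INR j)) ^ 2 / 2)) n.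
Proof.
  intros Hn; unfold Ssum; apply sum_eq; intros j Hj.
  unfold Cj, binom_weight; rewrite (proj2 (Nat.leb_le j n) Hj).
  replace (/ INR n * (INR n - 2 * INR j)) with (1 - 2 * INR j / INR n)
    by (field; apply not_0_INR; lia).
  reflexivity.
Qed.

Lemma is_lim_seq_Ssum a lam : 1 <= a -> is_lim_seq (Ssum a lam) (exp (- a ^ 2 / 2 + a * lam)).
Proof.
  intros Ha.
  replace (- a ^ 2 / 2 + a * lam) with (lam * a - a ^ 2 / 2) by field.
  eapply is_lim_seq_ext_loc;
    [| exact (is_lim_seq_binom_weight_sum a _ _ Ha (is_entire_pseries_gaussian lam))].
  exists 1%nat; intros n Hn; symmetry; now apply Ssum_binom_weight_sum.
Qed.

Theorem proposition5p2 (a : R) (ha : 1 < a) :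
  (forall lam : R,
     is_lim_seq (fun n => Ssum a lam n) (exp (- a ^ 2 / 2 + a * lam)))
  /\ is_lim_seq (fun n => Ssum a 0 n) (exp (- a ^ 2 / 2))
  /\ is_lim_seq (fun n => Ssum a (a / 2) n) 1.
Proof.
  assert (Ha : 1 <= a) by lra.
  split; [|split].
  - intros lam; now apply is_lim_seq_Ssum.
  - replace (- a ^ 2 / 2) with (- a ^ 2 / 2 + a * 0) by ring.
    now apply is_lim_seq_Ssum.
  - rewrite <- exp_0; replace 0 with (- a ^ 2 / 2 + a * (a / 2)) by field.
    now apply is_lim_seq_Ssum.
Qed.
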